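(* Let $X$ be a complex Banach space, $\mathcal{F}$ an algebra with unit, $\Phi:\mathcal{F}\to\mathcal{C}(X)$ a proto-calculus, $\mathcal{B}:=\{b\in\mathcal{F}:\Phi(b)\in\mathcal{L}(X)\}$, and let $(\mathcal{F}',\Phi')$ be the dual calculus associated with $\Phi$. Let $f\in\mathcal{F}'$ and $$D_f:=\mathrm{span}\{\Phi(e)x: x\in X,\ e\in\mathcal{B},\ fe\in\mathcal{B}\}.$$ Then: (a) $D_f$ is dense in $X$ and $D_f\subseteq\mathrm{dom}(\Phi(f))$; in particular $\Phi(f)$ is densely defined. (b) $\Phi(f)'\subseteq\Phi'(f)$, with equality if and only if $D_f$ is a core for $\Phi(f)$. (c) $\Phi(f)$ is bounded if and only if $\Phi'(f)$ is bounded; in this case $\Phi'(f)=\Phi(f)'$.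
   Context: $\mathcal{F}$ need not be commutative. $\mathcal{L}(X)$, $\mathcal{C}(X)$: bounded, resp. closed linear operators; operator inclusions are graph inclusions, sums/products have natural domains, ''$Tx=y$'' means $x\in\mathrm{dom}(T)$, $Tx=y$; $T'$ denotes the Banach space adjoint of an operator $T$ on $X$ (acting on the dual space $X'$). A proto-calculus is a map $\Phi:\mathcal{F}\to\mathcal{C}(X)$ with (FC1) $\Phi(\mathbf{1})=I$; (FC2) $\lambda\Phi(f)\subseteq\Phi(\lambda f)$, $\Phi(f)+\Phi(g)\subseteq\Phi(f+g)$; (FC3) $\Phi(f)\Phi(g)\subseteq\Phi(fg)$, $\mathrm{dom}(\Phi(f)\Phi(g))=\mathrm{dom}(\Phi(g))\cap\mathrm{dom}(\Phi(fg))$. Dual calculus: $\mathcal{B}$ is a unital subalgebra and $b\mapsto\Phi(b)'$ is a homomorphism from $\mathcal{B}$ with the opposite multiplication $f\cdot_{\mathrm{op}}g=gf$ into $\mathcal{L}(X')$. Let $\mathcal{F}'$ be the set of $f\in\mathcal{F}$ such that for every $d\in\mathcal{B}$ one has $\bigcap\{\ker\Phi(e)': e\in\mathcal{B},\ fde\in\mathcal{B}\}=\{0\}$ (with this set of $e$ nonempty). For $f\in\mathcal{F}'$ the operator $\Phi'(f)$ on $X'$ is defined by: $\Phi'(f)x'=y'$ iff $\Phi(fe)'x'=\Phi(e)'y'$ for all $e\in\mathcal{B}$ with $fe\in\mathcal{B}$. (This $\Phi'$ is a calculus on $\mathcal{F}'$ with the opposite multiplication and extends $b\mapsto\Phi(b)'$.)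 A subspace $D\subseteq\mathrm{dom}(T)$ is a core for a closed operator $T$ if the closure of $T|_D$ is $T$. *)

From HB Require Import structures.
From mathcomp Require Import all_boot all_order all_algebra.
From mathcomp Require Import all_classical all_reals all_analysis.
From mathcomp Require Import complex.
Import numFieldNormedType.Exports.
Set Implicit Arguments. Unset Strict Implicit. Unset Printing Implicit Defensive.
Import Order.TTheory GRing.Theory Num.Theory.
Local Open Scope ring_scope.
Local Open Scope classical_set_scope.
Local Open Scope complex_scope.

(* Linear (possibly unbounded) operators on a space V are represented by their
   graphs  G : set (V * V);  "T x = y" is  G (x, y).                         *)

Section Operators.
Variable R : realType.
Variable X : completeNormedModType R[i].

Definition op_dom (G : set (X * X)) : set X := [set x | exists y, G (x, y)].

Definition linear_op (G : set (X * X)) : Prop :=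
  [/\ G (0, 0),
      (forall x y u v, G (x, y) -> G (u, v) -> G (x + u, y + v)),
      (forall (c : R[i]) x y, G (x, y) -> G (c *: x, c *: y)) &
      (forall x y z, G (x, y) -> G (x, z) -> y = z)].

Definition closed_op (G : set (X * X)) : Prop := linear_op G /\ closed G.

Definition bounded_op (G : set (X * X)) : Prop :=
  [/\ linear_op G, op_dom G = setT &
      exists M : R, forall x y, G (x, y) -> `|y| <= M%:C * `|x|].

Definition proto_calculus (F : algType R[i]) (Phi : F -> set (X * X)) : Prop :=
  (forall f, closed_op (Phi f)) /\
  Phi 1 = [set p | p.2 = p.1] /\
  (forall (c : R[i]) f x y, Phi f (x, y) -> Phi (c *: f) (x, c *: y)) /\
  (forall f g x y z, Phi f (x, y) -> Phi g (x, z) -> Phi (f + g) (x, y + z)) /\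
  (forall f g x y z, Phi g (x, y) -> Phi f (y, z) -> Phi (f * g) (x, z)) /\
  (* FC3: dom (Phi f Phi g) = dom (Phi g) ∩ dom (Phi (f g)) *)
  (forall f g x y, Phi g (x, y) -> op_dom (Phi (f * g)) x -> op_dom (Phi f) y).

Definition Bset (F : algType R[i]) (Phi : F -> set (X * X)) : set F :=
  [set b | bounded_op (Phi b)].

Definition dual_norm_le (x' : X -> R[i]) (c : R) : Prop :=
  forall x, `|x' x| <= c%:C * `|x|.

Definition dualp (x' : X -> R[i]) : Prop :=
  (forall (c : R[i]) x y, x' (c *: x + y) = c * x' x + x' y) /\
  exists c : R, dual_norm_le x' c.

Definition dual_op_dom (G : set ((X -> R[i]) * (X -> R[i]))) : set (X -> R[i]) :=
  [set x' | exists y', G (x', y')].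

Definition dual_bounded_op (G : set ((X -> R[i]) * (X -> R[i]))) : Prop :=
  [/\ (forall x' y', G (x', y') -> dualp x' /\ dualp y'),
      (forall x', dualp x' -> dual_op_dom G x'),
      (forall x' y1 y2, G (x', y1) -> G (x', y2) -> y1 = y2),
      (forall x' y' u' v' (c : R[i]), G (x', y') -> G (u', v') ->
          G (fun x => c * x' x + u' x, fun x => c * y' x + v' x)) &
      exists M : R, forall x' y' c, G (x', y') -> dual_norm_le x' c ->
          dual_norm_le y' (M * c)].

Definition adjoint (G : set (X * X)) : set ((X -> R[i]) * (X -> R[i])) :=
  [set p | dualp p.1 /\ dualp p.2 /\ forall x y, G (x, y) -> p.1 y = p.2 x].

(* kernel of Phi(e)' for bounded Phi(e) *)
Definition adj_ker (G : set (X * X)) : set (X -> R[i]) :=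
  [set x' | dualp x' /\ forall x y, G (x, y) -> x' y = 0].

Definition Fdual (F : algType R[i]) (Phi : F -> set (X * X)) : set F :=
  [set f | forall d, Bset Phi d ->
     (exists e, Bset Phi e /\ Bset Phi (f * d * e)) /\
     (forall x', (forall e, Bset Phi e -> Bset Phi (f * d * e) -> adj_ker (Phi e) x') ->
        forall x, x' x = 0)].

(* Phi'(f) : Phi'(f) x' = y' iff Phi(f e)' x' = Phi(e)' y' for all
   e ∈ B with f e ∈ B. *)
Definition Phi_dual (F : algType R[i]) (Phi : F -> set (X * X)) (f : F) :
    set ((X -> R[i]) * (X -> R[i])) :=
  [set p | dualp p.1 /\ dualp p.2 /\
     forall e, Bset Phi e -> Bset Phi (f * e) ->
       forall x u v, Phi (f * e) (x, u) -> Phi e (x, v) -> p.1 u = p.2 v].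

Definition span (S : set X) : set X :=
  [set v | exists s : seq (R[i] * X),
      (forall p, p \in s -> S p.2) /\ v = \sum_(p <- s) p.1 *: p.2].

Definition Dset (F : algType R[i]) (Phi : F -> set (X * X)) (f : F) : set X :=
  span [set y | exists x e, Bset Phi e /\ Bset Phi (f * e) /\ Phi e (x, y)].

Definition core (D : set X) (G : set (X * X)) : Prop :=
  D `<=` op_dom G /\ closure [set p | G p /\ D p.1] = G.

End Operators.

(* Hahn-Banach, obtained from Zorn's lemma on dominated partial graphs and then
   complexified, drives (a) and (b).
   (a) By (FC3), Phi(f) Phi(e) x = Phi(fe) x, so D_f lies in dom Phi(f).  A
   functional vanishing on D_f kills the range of every Phi(e) with e, fe in B,
   hence is zero because f is in F' (take d = 1); so D_f is dense.
   (b) On a generator y = Phi(e) x the defining relation of Phi'(f) reads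
   x'(Phi(f) y) = y'(y), and it extends to D_f by linearity: Phi'(f) is the
   adjoint of the restriction of Phi(f) to D_f.  It therefore contains Phi(f)'
   and equals it when D_f is a core.  If D_f is not a core, separating a point
   of the graph of Phi(f) from the closure of the graph of the restriction, in
   X * X, yields an element of Phi'(f) outside Phi(f)'.
   (c) If Phi(f) is bounded, the dense subspace D_f is a core, so Phi'(f) =
   Phi(f)' is bounded.  Conversely, if Phi'(f) is bounded by M, testing against
   norming functionals gives |Phi(f) d| <= M |d| on D_f, and a closed operator
   that is bounded on a dense subspace of its domain is bounded. *)

From HB Require Import structures.
From mathcomp Require Import all_boot all_order all_algebra.
From mathcomp Require Import all_classical all_reals all_analysis.
From mathcomp Require Import complex.
From mathcomp.algebra_tactics Require Import ring lra.
Import Order.TTheory GRing.Theory Num.Theory.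
Import numFieldNormedType.Exports.
Set Implicit Arguments. Unset Strict Implicit. Unset Printing Implicit Defensive.
Local Open Scope ring_scope.
Local Open Scope classical_set_scope.
Local Open Scope complex_scope.

Section HahnBanach.
Variables (R : realType) (V : lmodType R[i]) (p : V -> R).
Hypothesis pD : forall u v, p (u + v) <= p u + p v.
Hypothesis pZ : forall (c : R[i]) v, (p (c *: v))%:C = `|c| * (p v)%:C.

Lemma sublinear0 : p 0 = 0.
Proof. by have := pZ 0 0; rewrite scale0r normr0 mul0r => /complexI. Qed.

Lemma sublinearZr (r : R) v : 0 <= r -> p (r%:C *: v) = r * p v.
Proof.
move=> r0; apply: complexI; rewrite pZ rmorphM /=; congr (_ * _).
by apply: ger0_norm; rewrite ler0c.
Qed.

Lemma sublinearN v : p (- v) = p v.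
Proof. by apply: complexI; rewrite -scaleN1r pZ normrN normr1 mul1r. Qed.

Lemma sublinear_ge0 v : 0 <= p v.
Proof. by have := pD v (- v); rewrite subrr sublinear0 sublinearN; lra. Qed.

(* The empty graph qualifies, so that the union of an empty chain stays in the
   class. *)
Definition dominated_graph (A : set (V * R)) : Prop :=
  [/\ (forall u a v b, A (u, a) -> A (v, b) -> A (u + v, a + b)),
      (forall r u a, A (u, a) -> A (r%:C *: u, r * a)),
      (forall u a b, A (u, a) -> A (u, b) -> a = b) &
      (forall u a, A (u, a) -> a <= p u)].

Lemma dominated_graphB A u a v b : dominated_graph A ->
  A (u, a) -> A (v, b) -> A (u - v, a - b).
Proof.
case=> AD AZ _ _ Aua Avb; have := AD _ _ _ _ Aua (AZ (-1) _ _ Avb).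
by rewrite rmorphN rmorph1 scaleN1r mulN1r.
Qed.

Lemma dominated_graph_bigcup (F : set (set (V * R))) :
  (forall A, F A -> dominated_graph A) -> total_on F subset ->
  dominated_graph (\bigcup_(A in F) A).
Proof.
move=> Fdom Ftot.
have common q1 q2 : (\bigcup_(A in F) A) q1 -> (\bigcup_(A in F) A) q2 ->
    exists2 A, F A & A q1 /\ A q2.
  move=> [A1 FA1 A1q] [A2 FA2 A2q].
  by case: (Ftot _ _ FA1 FA2) => sA; [exists A2 | exists A1]; rewrite //; split=> //; apply: sA.
split.
- move=> u a v b Uua Uvb; have [A FA [Aua Avb]] := common _ _ Uua Uvb.
  by exists A => //; case: (Fdom _ FA) => AD _ _ _; apply: AD.
- by move=> r u a [A FA Aua]; exists A => //; case: (Fdom _ FA) => _ AZ _ _; apply: AZ.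
- move=> u a b Uua Uub; have [A FA [Aua Aub]] := common _ _ Uua Uub.
  by case: (Fdom _ FA) => _ _ Afun _; apply: Afun Aua Aub.
- by move=> u a [A FA Aua]; case: (Fdom _ FA) => _ _ _ Ap; apply: Ap.
Qed.

Definition admissible_value A x1 c :=
  forall u a, A (u, a) -> a - p (u - x1) <= c /\ c <= p (u + x1) - a.

Lemma dominated_graph_gap A x1 : dominated_graph A -> A (0, 0) ->
  exists c, admissible_value A x1 c.
Proof.
case=> AD _ _ Ap A00.
have gap w b u a : A (w, b) -> A (u, a) -> b - p (w - x1) <= p (u + x1) - a.
  move=> Awb Aua; have := Ap _ _ (AD _ _ _ _ Awb Aua).
  have := pD (w - x1) (u + x1); rewrite addrACA addNr addr0; lra.
pose S := [set s | exists w b, A (w, b) /\ s = b - p (w - x1)].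
have S_ub u a : A (u, a) -> ubound S (p (u + x1) - a).
  by move=> Aua _ [w [b [Awb ->]]]; apply: gap Awb Aua.
exists (sup S) => u a Aua; split.
  by apply: ub_le_sup; [exists (p (0 + x1) - 0); apply: S_ub | exists u, a].
by apply: ge_sup (S_ub _ _ Aua); exists (0 - p (0 - x1)), 0, 0.
Qed.

Lemma dominated_graph_step_le A x1 c u a t : dominated_graph A ->
  admissible_value A x1 c -> A (u, a) -> a + t * c <= p (u + t%:C *: x1).
Proof.
case=> _ AZ _ Ap hc Aua.
have [t_lt0|t_gt0|->] := ltrgtP t 0; last first.
- by rewrite mul0r scale0r !addr0; apply: Ap Aua.
- have := (hc _ _ (AZ t^-1 _ _ Aua)).2.
  have -> : u + t%:C *: x1 = t%:C *: (t^-1%:C *: u + x1).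
    by rewrite scalerDr scalerA -rmorphM mulfV ?gt_eqF // scale1r.
  rewrite (sublinearZr _ (ltW t_gt0)) => h.
  have := ler_wpM2l (ltW t_gt0) h; rewrite mulrBr mulrA mulfV ?gt_eqF //; lra.
- have nt_gt0 : 0 < - t by rewrite oppr_gt0.
  have := (hc _ _ (AZ (- t)^-1 _ _ Aua)).1.
  have -> : u + t%:C *: x1 = (- t)%:C *: ((- t)^-1%:C *: u - x1).
    rewrite scalerDr scalerA -rmorphM mulfV ?gt_eqF // scale1r.
    by rewrite scalerN rmorphN scaleNr opprK.
  rewrite (sublinearZr _ (ltW nt_gt0)) => h.
  have := ler_wpM2l (ltW nt_gt0) h; rewrite mulrBr mulrA mulfV ?gt_eqF //; lra.
Qed.

Lemma dominated_graph_extend A x1 : dominated_graph A -> A (0, 0) ->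
  ~ (exists a, A (x1, a)) -> exists B, dominated_graph B /\ A `<` B.
Proof.
move=> domA A00 Ax1; have [c hc] := dominated_graph_gap x1 domA A00.
have [AD AZ Afun _] := domA.
pose B := [set q | exists u a t, A (u, a) /\ q = (u + t%:C *: x1, a + t * c)].
exists B; split; last first.
  split=> [[u a] Aua|AB]; first by exists u, a, 0; rewrite scale0r mul0r !addr0.
  by apply: Ax1; exists c; apply: AB; exists 0, 0, 1; rewrite scale1r mul1r !add0r.
split.
- move=> _ _ _ _ [u [a [t [Aua [-> ->]]]]] [v [b [s [Avb [-> ->]]]]].
  exists (u + v), (a + b), (t + s); split; first exact: AD.
  by congr pair; [rewrite rmorphD scalerDl addrACA | ring].
- move=> r _ _ [u [a [t [Aua [-> ->]]]]]; exists (r%:C *: u), (r * a), (r * t).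
  by split; [exact: AZ | congr pair; [rewrite scalerDr scalerA -rmorphM | ring]].
- move=> _ _ _ [u [a [t [Aua [-> ->]]]]] [v [b [s [Avb [e ->]]]]].
  have [ts|nts] := eqVneq t s.
    by subst s; move/addIr: e => e; subst v; rewrite (Afun _ _ _ Aua Avb).
  have vu : (t - s)%:C *: x1 = v - u.
    by rewrite rmorphB scalerBl -[t%:C *: x1](addKr u) e addrA addrK addrC.
  case: Ax1; exists ((t - s)^-1 * (b - a)).
  have := AZ (t - s)^-1 _ _ (dominated_graphB domA Avb Aua).
  by rewrite -vu scalerA -rmorphM mulVf ?subr_eq0 // scale1r.
- move=> _ _ [u [a [t [Aua [-> ->]]]]].
  exact: (dominated_graph_step_le t domA hc Aua).
Qed.

Theorem hahn_banach_graph A0 : dominated_graph A0 -> A0 (0, 0) ->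
  exists g : V -> R,
  [/\ (forall u v, g (u + v) = g u + g v), (forall r u, g (r%:C *: u) = r * g u),
      (forall u, g u <= p u) & (forall u a, A0 (u, a) -> g u = a)].
Proof.
move=> domA0 A000.
pose P A := A = set0 \/ A0 `<=` A /\ dominated_graph A.
have domP A : P A -> dominated_graph A.
  by case=> [->|[]//]; split=> * //=; contradiction.
have [A [PA maxA]] : exists A, P A /\ forall B, A `<` B -> ~ P B.
  apply: Zorn_bigcup => F FP Ftot.
  have [[q [A FA Aq]]|Fq] := pselect (exists q, (\bigcup_(A in F) A) q).
    right; split; last by apply: dominated_graph_bigcup => // *; apply/domP/FP.
    case: (FP _ FA) => [eA|[A0A _]]; first by rewrite eA in Aq.
    by move=> q' A0q'; exists A => //; apply: A0A.
  by left; apply/seteqP; split=> // q Fq'; case: Fq; exists q.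
have [A0A domA] : A0 `<=` A /\ dominated_graph A.
  case: PA => // eA; exfalso; apply: (maxA A0); last by right; split.
  by rewrite eA; split=> // /(_ _ A000).
have Atot v : exists a, A (v, a).
  apply: contrapT => Av.
  have [B [domB AB]] := dominated_graph_extend domA (A0A _ A000) Av.
  by apply: (maxA B AB); right; split=> // q /A0A /(properW AB).
have [g Ag] := choice Atot; have [AD AZ Afun Ap] := domA.
exists g; split=> [u v|r u|u|u a /A0A]; last exact: Afun.
- exact: Afun (Ag _) (AD _ _ _ _ (Ag u) (Ag v)).
- exact: Afun (Ag _) (AZ r _ _ (Ag u)).
- exact: Ap (Ag u).
Qed.

Section Separation.
Variables (M : set V) (x0 : V) (delta : R).
Hypotheses (M0 : M 0) (MD : forall u v, M u -> M v -> M (u + v))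
  (MZ : forall (c : R[i]) u, M u -> M (c *: u)).
Hypotheses (delta_gt0 : 0 < delta) (x0_far : forall m, M m -> delta <= p (x0 - m)).

Let dist_graph := [set q | exists m t, M m /\ q = (m + t%:C *: x0, t * delta)].

Lemma dominated_dist_graph : dominated_graph dist_graph.
Proof.
have MN m : M m -> M (- m) by rewrite -scaleN1r; apply: MZ.
split.
- move=> _ _ _ _ [m [t [Mm [-> ->]]]] [m' [t' [Mm' [-> ->]]]].
  exists (m + m'), (t + t'); split; first exact: MD.
  by rewrite rmorphD scalerDl mulrDl addrACA.
- move=> r _ _ [m [t [Mm [-> ->]]]]; exists (r%:C *: m), (r * t).
  by split; [exact: MZ | rewrite scalerDr scalerA -rmorphM mulrA].
- move=> _ _ _ [m [t [Mm [-> ->]]]] [m' [t' [Mm' [e ->]]]].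
  have [->//|tt'] := eqVneq t t'; exfalso.
  have x0E : x0 = (t - t')^-1%:C *: (m' - m).
    have <- : (t - t')%:C *: x0 = m' - m.
      by rewrite rmorphB scalerBl -[t%:C *: x0](addKr m) e addrA addrK addrC.
    by rewrite scalerA -rmorphM mulVf ?subr_eq0 // scale1r.
  have := x0_far (MZ (t - t')^-1%:C (MD Mm' (MN _ Mm))).
  by rewrite -x0E subrr sublinear0 leNgt delta_gt0.
- move=> _ _ [m [t [Mm [-> ->]]]].
  have [t_le0|t_gt0] := lerP t 0.
    by apply: le_trans (sublinear_ge0 _); rewrite pmulr_lle0.
  have -> : m + t%:C *: x0 = t%:C *: (x0 - (- t^-1%:C *: m)).
    by rewrite scaleNr opprK scalerDr scalerA -rmorphM mulfV ?gt_eqF // scale1r addrC.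
  by rewrite (sublinearZr _ (ltW t_gt0)) ler_pM2l //; apply/x0_far/MZ.
Qed.

Lemma hahn_banach_real_separation : exists g : V -> R,
  [/\ (forall u v, g (u + v) = g u + g v), (forall r u, g (r%:C *: u) = r * g u),
      (forall u, g u <= p u), (forall m, M m -> g m = 0) & g x0 = delta].
Proof.
have dist_graph00 : dist_graph (0, 0) by exists 0, 0; rewrite scale0r mul0r addr0.
have [g [gD gZ gp g0]] := hahn_banach_graph dominated_dist_graph dist_graph00.
exists g; split=> // [m Mm|].
- by apply: g0; exists m, 0; rewrite scale0r mul0r addr0.
- by apply: g0; exists 0, 1; rewrite scale1r add0r mul1r.
Qed.

Lemma hahn_banach_separation : exists L : V -> R[i],
  [/\ (forall c u v, L (c *: u + v) = c * L u + L v), (forall m, M m -> L m = 0),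
      complex.Re (L x0) = delta & (forall v, `|L v| <= (p v)%:C)].
Proof.
have [g [gD gZ gp gM gx0]] := hahn_banach_real_separation.
pose L v := (g v)%:C - 'i * (g ('i *: v))%:C.
have ReL w : complex.Re (L w) = g w by rewrite /L; simpc.
have LD u v : L (u + v) = L u + L v.
  by rewrite /L scalerDr !gD !rmorphD /= mulrDr opprD addrACA.
have LR (r : R) u : L (r%:C *: u) = r%:C * L u.
  by rewrite /L scalerA [_ * r%:C]mulrC -scalerA !gZ !rmorphM /= mulrBr mulrCA.
have Li u : L ('i *: u) = 'i * L u.
  have ii : 'i * 'i = -1 :> R[i] by rewrite -expr2 sqr_i.
  rewrite /L scalerA ii -(rmorph1 (real_complex R)) -rmorphN gZ mulN1r rmorphN /=.
  by rewrite mulrBr mulrA ii mulN1r opprK mulrN opprK addrC.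
have LZ c u : L (c *: u) = c * L u.
  rewrite [c]complexE scalerDl LD LR -scalerA Li LR.
  by rewrite mulrDl mulrA.
exists L; split=> [c u v|m Mm||v]; first by rewrite LD LZ.
- by rewrite /L gM // gM ?mulr0 ?subr0 //; apply: MZ.
- by rewrite ReL.
- have [->|Lv0] := eqVneq (L v) 0; first by rewrite normr0 ler0c sublinear_ge0.
  pose c := `|L v| / L v.
  have c1 : `|c| = 1 by rewrite normrM normfV normr_id mulfV // normr_eq0.
  have -> : `|L v| = (g (c *: v))%:C.
    by rewrite -ReL LZ mulfVK // RRe_real // normr_real.
  rewrite lecR (le_trans (gp _)) //.
  by have := pZ c v; rewrite c1 mul1r => /complexI ->.
Qed.

End Separation.

End HahnBanach.

Section RealNorm.
Variable R : realType.

(* Norms over [R[i]] take values in [R[i]]; [rnorm] is their real part, so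
   that norm estimates can be done in the real closed field [R]. *)
Definition rnorm (V : normedZmodType R[i]) (v : V) : R := complex.Re `|v|.

Section NormedZmod.
Variable V : normedZmodType R[i].

Lemma rnormE (v : V) : `|v| = (rnorm v)%:C.
Proof. by rewrite /rnorm RRe_real // normr_real. Qed.

Lemma rnorm_ge0 (v : V) : 0 <= rnorm v.
Proof. by rewrite -ler0c -rnormE. Qed.

Lemma rnormD (u v : V) : rnorm (u + v) <= rnorm u + rnorm v.
Proof. by rewrite -lecR rmorphD /= -!rnormE ler_normD. Qed.

Lemma rnormN (v : V) : rnorm (- v) = rnorm v.
Proof. by rewrite /rnorm normrN. Qed.

Lemma rnorm0 : rnorm (0 : V) = 0.
Proof. by rewrite /rnorm normr0. Qed.

Lemma rnorm_eq0 (v : V) : (rnorm v == 0) = (v == 0).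
Proof.
by apply/eqP/eqP=> [v0|->]; [apply/normr0_eq0; rewrite rnormE v0 | exact: rnorm0].
Qed.

Lemma rnorm_gt0 (v : V) : (0 < rnorm v) = (v != 0).
Proof. by rewrite lt_neqAle rnorm_ge0 andbT eq_sym rnorm_eq0. Qed.

Lemma rdistC (u v : V) : rnorm (u - v) = rnorm (v - u).
Proof. by rewrite /rnorm distrC. Qed.

Lemma rnorm_le_dist (u v : V) : rnorm u <= rnorm v + rnorm (v - u).
Proof. by have := rnormD v (- (v - u)); rewrite rnormN opprB addrC subrK. Qed.

End NormedZmod.

Lemma rnormM (a b : R[i]) : rnorm (a * b) = rnorm a * rnorm b.
Proof. by apply: complexI; rewrite rmorphM /= -!rnormE normrM. Qed.

Lemma Re_le_rnorm (z : R[i]) : complex.Re z <= rnorm z.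
Proof. by rewrite -lecR -rnormE (le_trans _ (normc_ge_Re z)) // lecR ler_norm. Qed.

Lemma complex_gt0P (z : R[i]) : 0 < z -> exists2 r : R, 0 < r & z = r%:C.
Proof.
move=> z_gt0; exists (complex.Re z); last by rewrite RRe_real // gtr0_real.
by move: z_gt0; rewrite ltcE => /andP [].
Qed.

Lemma closure_ballP (Y : pseudoMetricType R[i]) (A : set Y) y :
  closure A y <-> forall e : R, 0 < e -> exists2 a, A a & ball y e%:C a.
Proof.
split=> [Ay e e_gt0|Aball B /nbhs_ballP [_ /= /complex_gt0P [e /Aball [a Aa yea] ->] yeB]].
  by rewrite -ltcR in e_gt0; have [a [Aa yea]] := Ay _ (nbhsx_ballx y _ e_gt0); exists a.
by exists a; split=> //; apply: yeB.
Qed.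

Section NormedModule.
Variable X : normedModType R[i].

Lemma rnormZ c (x : X) : (rnorm (c *: x))%:C = `|c| * (rnorm x)%:C.
Proof. by rewrite -!rnormE normrZ. Qed.

Lemma closure_rnormP (A : set X) x :
  closure A x <-> forall e : R, 0 < e -> exists2 a, A a & rnorm (x - a) < e.
Proof.
rewrite closure_ballP; split=> Ax e /Ax [a Aa xea]; exists a => //;
  by move: xea; rewrite -ball_normE /= rnormE ltcR.
Qed.

Lemma closure_graphP (A : set (X * X)) x y :
  closure A (x, y) <-> forall e : R, 0 < e ->
    exists a b, [/\ A (a, b), rnorm (x - a) < e & rnorm (y - b) < e].
Proof.
rewrite closure_ballP; split=> Axy e /Axy.
  move=> [[a b] Aab [xea yeb]]; exists a, b.
  by move: xea yeb; rewrite -!ball_normE /= !rnormE !ltcR.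
move=> [a [b [Aab xea yeb]]]; exists (a, b) => //.
by split; rewrite -ball_normE /= rnormE ltcR.
Qed.

Lemma exists_gt0_mulr_add1 (e K : R) : 0 < e -> 0 <= K ->
  exists2 q, 0 < q & q * (K + 1) = e.
Proof.
move=> e_gt0 K_ge0; exists (e / (K + 1)); first by rewrite divr_gt0 // ltr_wpDl.
by rewrite mulfVK // gt_eqF // ltr_wpDl.
Qed.

Lemma not_closure_rnorm (A : set X) x : ~ closure A x ->
  exists2 e, 0 < e & forall a, A a -> e <= rnorm (x - a).
Proof.
move=> Ax; apply: contrapT => far; apply/Ax/closure_rnormP => e e_gt0.
apply: contrapT => near; apply: far; exists e => // a Aa.
by rewrite leNgt; apply/negP => xae; apply: near; exists a.
Qed.

Lemma not_closure_graph (A : set (X * X)) x y : ~ closure A (x, y) ->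
  exists2 e, 0 < e & forall a b, A (a, b) -> e <= rnorm (x - a) + rnorm (y - b).
Proof.
move=> Axy; apply: contrapT => far; apply/Axy/closure_graphP => e e_gt0.
apply: contrapT => near; apply: far; exists e => // a b Aab.
rewrite leNgt; apply/negP => xyab; apply: near; exists a, b; split=> //.
  by have := rnorm_ge0 (y - b); lra.
by have := rnorm_ge0 (x - a); lra.
Qed.

End NormedModule.
End RealNorm.

Section Span.
Variables (R : realType) (X : completeNormedModType R[i]).
Implicit Types (S : set X) (x y : X).

Lemma span_sub S : S `<=` span S.
Proof.
move=> x Sx; exists [:: (1, x)]; split; last by rewrite big_seq1 scale1r.
by move=> q; rewrite inE => /eqP ->.
Qed.

Lemma span0 S : span S 0.
Proof. by exists [::]; rewrite big_nil. Qed.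

Lemma spanD S x y : span S x -> span S y -> span S (x + y).
Proof.
move=> [s [sS ->]] [t [tS ->]]; exists (s ++ t); rewrite big_cat; split=> // q.
by rewrite mem_cat => /orP[]; [apply: sS | apply: tS].
Qed.

Lemma spanZ S c x : span S x -> span S (c *: x).
Proof.
move=> [s [sS ->]]; exists [seq (c * q.1, q.2) | q <- s]; split.
  by move=> q' /mapP [q qs ->]; apply: sS qs.
by rewrite (big_map _ xpredT) scaler_sumr; apply: eq_bigr => q _; rewrite scalerA.
Qed.

Lemma spanB S x y : span S x -> span S y -> span S (x - y).
Proof. by move=> Sx Sy; rewrite -scaleN1r; apply/spanD/spanZ. Qed.

Lemma span_ind S (Q : set X) : Q 0 -> (forall x y, Q x -> Q y -> Q (x + y)) ->
  (forall c x, Q x -> Q (c *: x)) -> S `<=` Q -> span S `<=` Q.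
Proof.
move=> Q0 QD QZ SQ _ [s [sS ->]]; elim: s sS => [|q s IHs] sS; first by rewrite big_nil.
rewrite big_cons; apply: QD; first by apply/QZ/SQ/sS; rewrite mem_head.
by apply: IHs => q' q's; apply: sS; rewrite inE q's orbT.
Qed.

End Span.

Section Functionals.
Variables (R : realType) (X : completeNormedModType R[i]).
Implicit Types (x y : X) (phi psi : X -> R[i]).

Lemma dual_norm_leP phi c :
  dual_norm_le phi c <-> forall x, rnorm (phi x) <= c * rnorm x.
Proof. by split=> h x; have := h x; rewrite !rnormE -rmorphM lecR. Qed.

Lemma dualp_intro phi c :
  (forall (a : R[i]) x y, phi (a *: x + y) = a * phi x + phi y) ->
  (forall x, rnorm (phi x) <= c * rnorm x) -> dualp phi.
Proof. by move=> phi_lin phi_le; split=> //; exists c; apply/dual_norm_leP. Qed.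

Lemma dualp_zero : dualp (fun _ : X => 0 : R[i]).
Proof.
by apply: (@dualp_intro _ 0) => [a x y|x]; rewrite ?mulr0 ?addr0 ?mul0r ?rnorm0.
Qed.

Lemma dualp0 phi : dualp phi -> phi 0 = 0.
Proof.
move=> [phi_lin _]; have := phi_lin 1 0 0; rewrite scale1r addr0 mul1r => phi00.
by apply: (@addrI _ (phi 0)); rewrite addr0 -phi00.
Qed.

Lemma dualpD phi x y : dualp phi -> phi (x + y) = phi x + phi y.
Proof. by move=> [phi_lin _]; have := phi_lin 1 x y; rewrite scale1r mul1r. Qed.

Lemma dualpZ phi c x : dualp phi -> phi (c *: x) = c * phi x.
Proof. by move=> phid; have := phid.1 c x 0; rewrite !addr0 (dualp0 phid) addr0. Qed.

Lemma dualpB phi x y : dualp phi -> phi (x - y) = phi x - phi y.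
Proof. by move=> phid; rewrite dualpD // -scaleN1r dualpZ // mulN1r. Qed.

Lemma dualp_bound phi : dualp phi ->
  exists2 c, 0 <= c & forall x, rnorm (phi x) <= c * rnorm x.
Proof.
move=> [_ [c /dual_norm_leP phi_le]]; exists (Order.max c 0) => [|x].
  by rewrite le_max lexx orbT.
by rewrite (le_trans (phi_le x)) // ler_wpM2r ?rnorm_ge0 // le_max lexx.
Qed.

Lemma dualp_comb phi psi c :
  dualp phi -> dualp psi -> dualp (fun x => c * phi x + psi x).
Proof.
move=> phid psid; have [c1 c1_ge0 phi_le] := dualp_bound phid.
have [c2 c2_ge0 psi_le] := dualp_bound psid.
apply: (@dualp_intro _ (rnorm c * c1 + c2)) => [a x y|x].
  by rewrite !dualpD // !dualpZ //; ring.
rewrite (le_trans (rnormD _ _)) // rnormM mulrDl -mulrA.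
by rewrite lerD // ler_wpM2l ?rnorm_ge0.
Qed.

Lemma dualpN phi : dualp phi -> dualp (fun x => - phi x).
Proof.
move=> phid; have := dualp_comb (-1) phid dualp_zero; congr dualp.
by apply: funext => x; rewrite addr0 mulN1r.
Qed.

Lemma dualp_of_le_rnorm (L : X -> R[i]) :
  (forall c x y, L (c *: x + y) = c * L x + L y) ->
  (forall x, `|L x| <= (rnorm x)%:C) -> dualp L.
Proof.
move=> L_lin L_le; apply: (@dualp_intro _ 1) => // x.
by rewrite mul1r -lecR -rnormE.
Qed.

Lemma norming_functional v : exists L : X -> R[i],
  [/\ dualp L, dual_norm_le L 1 & rnorm v <= complex.Re (L v)].
Proof.
have [->|v_neq0] := eqVneq v 0.
  exists (fun _ => 0); split; [exact: dualp_zero | | by rewrite rnorm0].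
  by apply/dual_norm_leP => x; rewrite rnorm0 mul1r rnorm_ge0.
have M0 : [set 0 : X] 0 by [].
have MD u w : [set 0 : X] u -> [set 0 : X] w -> [set 0 : X] (u + w).
  by move=> -> ->; rewrite addr0.
have MZ c u : [set 0 : X] u -> [set 0 : X] (c *: u) by move=> ->; rewrite scaler0.
have v_far m : [set 0 : X] m -> rnorm v <= rnorm (v - m) by move=> ->; rewrite subr0.
have v_gt0 : 0 < rnorm v by rewrite rnorm_gt0.
have [L [L_lin _ <- L_le]] :=
  hahn_banach_separation (@rnormD _ X) (@rnormZ _ X) M0 MD MZ v_gt0 v_far.
exists L; split=> //; first exact: dualp_of_le_rnorm.
by apply/dual_norm_leP => x; rewrite mul1r -lecR -rnormE.
Qed.

Lemma dualp_pair_split (L : X * X -> R[i]) :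
  (forall c u v, L (c *: u + v) = c * L u + L v) ->
  (forall q, `|L q| <= (rnorm q.1 + rnorm q.2)%:C) ->
  [/\ dualp (fun x => L (x, 0)), dualp (fun y => L (0, y))
    & forall x y, L (x, y) = L (x, 0) + L (0, y)].
Proof.
move=> L_lin L_le; have Lsplit x y : L (x, y) = L (x, 0) + L (0, y).
  have -> : (x, y) = 1 *: (x, 0) + (0, y) :> X * X.
    by rewrite scale1r; apply/pair_equal_spec; rewrite /= addr0 add0r.
  by rewrite L_lin mul1r.
split=> //.
  apply: (@dualp_intro _ 1) => [c u v|x].
  - by rewrite -L_lin; congr L; apply/pair_equal_spec; rewrite /= scaler0 addr0.
  - by have := L_le (x, 0); rewrite mul1r -lecR -rnormE /= rnorm0 addr0.
apply: (@dualp_intro _ 1) => [c u v|y].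
- by rewrite -L_lin; congr L; apply/pair_equal_spec; rewrite /= scaler0 addr0.
- by have := L_le (0, y); rewrite mul1r -lecR -rnormE /= rnorm0 add0r.
Qed.

End Functionals.

Section LinearOperators.
Variables (R : realType) (X : completeNormedModType R[i]) (G : set (X * X)).
Hypothesis G_lin : linear_op G.

Lemma linear_op0 : G (0, 0). Proof. by case: G_lin. Qed.

Lemma linear_opD x y u v : G (x, y) -> G (u, v) -> G (x + u, y + v).
Proof. by case: G_lin => _ GD _ _; apply: GD. Qed.

Lemma linear_opZ c x y : G (x, y) -> G (c *: x, c *: y).
Proof. by case: G_lin => _ _ GZ _; apply: GZ. Qed.

Lemma linear_op_fun x y z : G (x, y) -> G (x, z) -> y = z.
Proof. by case: G_lin => _ _ _ Gfun; apply: Gfun. Qed.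

Lemma linear_opB x y u v : G (x, y) -> G (u, v) -> G (x - u, y - v).
Proof. by move=> Gxy /(linear_opZ (-1)); rewrite !scaleN1r; apply: linear_opD. Qed.

Lemma op_dom_span (S : set X) : S `<=` op_dom G -> span S `<=` op_dom G.
Proof.
apply: span_ind; first by exists 0; apply: linear_op0.
  by move=> x y [a Gxa] [b Gyb]; exists (a + b); apply: linear_opD.
by move=> c x [a Gxa]; exists (c *: a); apply: linear_opZ.
Qed.

Lemma adjoint_rel_span (S : set X) (phi psi : X -> R[i]) :
  dualp phi -> dualp psi -> S `<=` op_dom G ->
  (forall s z, S s -> G (s, z) -> phi z = psi s) ->
  forall d z, span S d -> G (d, z) -> phi z = psi d.
Proof.
move=> phid psid SG Srel.
suff rel_span : span S `<=` [set d | exists2 a, G (d, a) & phi a = psi d].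
  by move=> d z /rel_span [a Gda <-] /(linear_op_fun Gda) ->.
apply: span_ind.
- by exists 0; rewrite ?dualp0 //; apply: linear_op0.
- move=> x y [a Gxa xa] [b Gyb yb]; exists (a + b); first exact: linear_opD.
  by rewrite !dualpD // xa yb.
- by move=> c x [a Gxa xa]; exists (c *: a); rewrite ?dualpZ ?xa //; apply: linear_opZ.
- by move=> s Ss; have [a Gsa] := SG _ Ss; exists a; last exact: Srel.
Qed.

Lemma bounded_op_rnorm : bounded_op G ->
  exists2 K, 0 <= K & forall x y, G (x, y) -> rnorm y <= K * rnorm x.
Proof.
move=> [_ _ [M GM]]; exists (Order.max M 0) => [|x y /GM].
  by rewrite le_max lexx orbT.
rewrite !rnormE -rmorphM lecR => /le_trans; apply.
by rewrite ler_wpM2r ?rnorm_ge0 // le_max lexx.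
Qed.

Lemma bounded_op_fun : bounded_op G -> exists T : X -> X, forall x, G (x, T x).
Proof.
move=> [_ domG _]; have Gx x : exists y, G (x, y).
  by have : op_dom G x by rewrite domG.
by have [T GT] := choice Gx; exists T.
Qed.

Lemma dualp_comp_bounded (T : X -> X) (K : R) (phi : X -> R[i]) :
  (forall x, G (x, T x)) -> (forall x y, G (x, y) -> rnorm y <= K * rnorm x) ->
  dualp phi -> dualp (fun x => phi (T x)).
Proof.
move=> GT G_le phid; have [c c_ge0 phi_le] := dualp_bound phid.
have T_lin a x y : T (a *: x + y) = a *: T x + T y.
  exact: linear_op_fun (GT _) (linear_opD (linear_opZ a (GT x)) (GT y)).
apply: (dualp_intro (c := c * K)) => [a x y|x]; first by rewrite T_lin dualpD // dualpZ.
by rewrite (le_trans (phi_le _)) // -mulrA ler_wpM2l // G_le.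
Qed.

Lemma adjoint_bounded : bounded_op G -> dual_bounded_op (adjoint G).
Proof.
move=> Gb; have [K K_ge0 G_le] := bounded_op_rnorm Gb.
have [T GT] := bounded_op_fun Gb.
have adjT phi psi : adjoint G (phi, psi) -> psi = (fun x => phi (T x)).
  by move=> [_ [_ /= rel]]; apply: funext => x; rewrite (rel _ _ (GT x)).
split.
- by move=> phi psi [? []].
- move=> phi phid; exists (fun x => phi (T x)); split=> //.
  split; first exact: dualp_comp_bounded GT G_le phid.
  by move=> x y Gxy; rewrite (linear_op_fun Gxy (GT x)).
- by move=> phi psi1 psi2 /adjT -> /adjT ->.
- move=> phi psi phi' psi' c [phid [psid /= rel]] [phi'd [psi'd /= rel']].
  split; first exact: dualp_comb.
  split; first exact: dualp_comb.
  by move=> x y Gxy /=; rewrite (rel _ _ Gxy) (rel' _ _ Gxy).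
- exists K => phi psi c adj /dual_norm_leP phi_le; rewrite (adjT _ _ adj).
  apply/dual_norm_leP => x; have [c_ge0|c_lt0] := leP 0 c.
    by rewrite (le_trans (phi_le _)) // [K * c]mulrC -mulrA ler_wpM2l // G_le.
  have x0 : x = 0.
    apply/eqP; rewrite -rnorm_eq0 eq_le rnorm_ge0 andbT.
    by have := phi_le x; have := rnorm_ge0 (phi x); have := rnorm_ge0 x; nra.
  rewrite x0 (linear_op_fun (GT 0) linear_op0) (dualp0 adj.1 : phi 0 = 0).
  by rewrite !rnorm0 mulr0.
Qed.

Hypothesis G_closed : closed G.

Lemma closure_restrict_sub (D : set X) : closure [set q | G q /\ D q.1] `<=` G.
Proof. by rewrite {2}(closure_id G).1 //; apply: closureS => q []. Qed.

(* The images of approximants of [x] from [D] form a Cauchy net, whose limit is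
   the image of [x] since the graph is closed. *)
Section DenseBound.
Variables (D : set X) (K : R).
Hypotheses (D_dense : closure D = setT) (D_dom : D `<=` op_dom G)
  (DB : forall a b, D a -> D b -> D (a - b)) (K_ge0 : 0 <= K)
  (G_le : forall d z, D d -> G (d, z) -> rnorm z <= K * rnorm d).

Lemma dense_graph_approx x r : 0 < r ->
  exists d z, [/\ D d, G (d, z) & rnorm (x - d) < r].
Proof.
move=> r_gt0; have : closure D x by rewrite D_dense.
move=> /closure_rnormP /(_ r r_gt0) [d Dd xdr].
by have [z Gdz] := D_dom Dd; exists d, z.
Qed.

Lemma dense_graph_oscillation x d z d' z' :
  D d -> G (d, z) -> D d' -> G (d', z') ->
  rnorm (z - z') <= K * (rnorm (x - d) + rnorm (x - d')).
Proof.
move=> Dd Gdz Dd' Gdz'; apply: le_trans (G_le (DB Dd Dd') (linear_opB Gdz Gdz')) _.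
have -> : d - d' = (x - d') - (x - d) by rewrite opprB [RHS]addrC addrA subrK.
by rewrite ler_wpM2l // addrC (le_trans (rnormD _ _)) // rnormN.
Qed.

Lemma dense_graph_limit x : exists y, forall e : R, 0 < e ->
  exists d z, [/\ D d, G (d, z), rnorm (x - d) < e & rnorm (y - z) < e].
Proof.
pose B r := [set z | exists d, [/\ D d, rnorm (x - d) < r & G (d, z)]].
pose Fx := filter_from [set r : R | 0 < r] B.
have Fx_proper : ProperFilter Fx.
  apply: filter_from_proper => [|r /(dense_graph_approx x) [d [z [Dd Gdz xdr]]]].
    apply: filter_from_filter; first by exists 1; rewrite /= ltr01.
    move=> r s r_gt0 s_gt0; exists (Order.min r s).
      by rewrite /= lt_min r_gt0 s_gt0.
    by move=> z [d [Dd]]; rewrite lt_min => /andP[xdr xds] Gdz; split; exists d.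
  by exists z, d.
have Fx_cauchy : cauchy Fx.
  apply: cauchy_exP => _ /complex_gt0P [e e_gt0 ->].
  have [r r_gt0 Kr] : exists2 r, 0 < r & K * (2 * r) < e.
    have [r r_gt0 rK] := exists_gt0_mulr_add1 e_gt0 (mulr_ge0 (ler0n _ 2) K_ge0).
    by exists r => //; rewrite -rK; lra.
  have [d0 [z0 [Dd0 Gdz0 xd0]]] := dense_graph_approx x r_gt0.
  exists z0, r => // z [d [Dd xd Gdz]].
  rewrite -ball_normE /= rnormE ltcR.
  apply: le_lt_trans (dense_graph_oscillation x Dd0 Gdz0 Dd Gdz) _.
  by apply: le_lt_trans Kr; rewrite ler_wpM2l //; lra.
have Fx_cvg : cvg Fx by apply: cauchy_cvg.
exists (lim Fx) => e e_gt0; rewrite -ltcR in e_gt0.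
have [r /= r_gt0 Bry] := Fx_cvg _ (nbhsx_ballx (lim Fx) _ e_gt0).
rewrite ltcR in e_gt0.
have re_gt0 : 0 < Order.min r e by rewrite lt_min r_gt0 e_gt0.
have [d [z [Dd Gdz]]] := dense_graph_approx x re_gt0.
rewrite lt_min => /andP[xdr xde]; exists d, z; split=> //.
have : ball (lim Fx) e%:C z by apply: Bry; exists d.
by rewrite -ball_normE /= rnormE ltcR.
Qed.

Lemma closed_op_bounded_on_dense : bounded_op G.
Proof.
have xy_le x : exists y, G (x, y) /\ rnorm y <= K * rnorm x.
  have [y approx] := dense_graph_limit x; exists y; split.
    apply: (closure_restrict_sub (D := setT)); apply/closure_graphP => e /approx.
    by move=> [d [z [_ Gdz xd yz]]]; exists d, z.
  apply/ler_addgt0Pr => e e_gt0.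
  have [q q_gt0 qK] := exists_gt0_mulr_add1 e_gt0 K_ge0.
  have [d [z [Dd Gdz xd yz]]] := approx _ q_gt0.
  have := rnorm_le_dist y z; rewrite rdistC => yz'.
  have := rnorm_le_dist d x => dx.
  have Kd : K * rnorm d <= K * (rnorm x + q) by rewrite ler_wpM2l //; lra.
  have := G_le Dd Gdz; lra.
have [T GT] := choice xy_le.
split=> //; first by apply/seteqP; split=> // x _; exists (T x); case: (GT x).
exists K => x y Gxy; rewrite -(linear_op_fun (GT x).1 Gxy) !rnormE -rmorphM lecR.
by case: (GT x).
Qed.

End DenseBound.
End LinearOperators.

Section ProtoCalculus.
Variables (R : realType) (X : completeNormedModType R[i]) (F : algType R[i]).
Variable Phi : F -> set (X * X).
Hypothesis Phi_proto : proto_calculus Phi.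

Lemma Phi_closed_op g : closed_op (Phi g).
Proof. by case: Phi_proto. Qed.

Lemma Phi_linear g : linear_op (Phi g).
Proof. by case: (Phi_closed_op g). Qed.

Lemma Bset1 : Bset Phi 1.
Proof.
case: Phi_proto => _ [Phi1 _]; rewrite /Bset /= Phi1.
split; last by exists 1 => x y /= ->; rewrite mul1r.
  by split=> /= [|x y u v -> ->|c x y ->|x y z -> ->].
by apply/seteqP; split=> // x _; exists x.
Qed.

Lemma Phi_mul_graph f g x y u :
  Phi g (x, y) -> Phi (f * g) (x, u) -> Phi f (y, u).
Proof.
case: Phi_proto => _ [_ [_ [_ [Phi_mul Phi_mul_dom]]]] Gxy Gfxu.
have [z Gfyz] := Phi_mul_dom f g x y Gxy (ex_intro _ u Gfxu).
by rewrite -(linear_op_fun (Phi_linear _) (Phi_mul f g x y z Gxy Gfyz) Gfxu).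
Qed.

Variable f : F.

Local Notation G := (Phi f).
Local Notation D := (Dset Phi f).

Lemma Dset_generator_graph e x y :
  Bset Phi e -> Bset Phi (f * e) -> Phi e (x, y) ->
  exists2 u, Phi (f * e) (x, u) & G (y, u).
Proof.
move=> _ [_ dom_fe _] Gexy; have : op_dom (Phi (f * e)) x by rewrite dom_fe.
by move=> [u Gfexu]; exists u => //; apply: Phi_mul_graph Gexy Gfexu.
Qed.

Lemma Dset_dom : D `<=` op_dom G.
Proof.
move=> d Dd; apply: (op_dom_span (Phi_linear f) _ Dd) => y [x [e [Be [Bfe Gexy]]]].
by have [u _ Gyu] := Dset_generator_graph Be Bfe Gexy; exists u.
Qed.

Lemma Phi_dualP phi psi : Phi_dual Phi f (phi, psi) <->
  [/\ dualp phi, dualp psi & forall d z, D d -> G (d, z) -> phi z = psi d].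
Proof.
split=> [[/= phid [psid rel]]|[phid psid rel]].
  split=> // d z Dd; apply: (adjoint_rel_span (Phi_linear f) phid psid _ _ Dd).
    by move=> y Dy; apply/Dset_dom/span_sub.
  move=> y z' [x [e [Be [Bfe Gexy]]]] Gyz.
  have [u Gfexu Gyu] := Dset_generator_graph Be Bfe Gexy.
  by rewrite -(linear_op_fun (Phi_linear f) Gyu Gyz); apply: rel Gfexu Gexy.
split=> //; split=> // e Be Bfe x u v Gfexu Gexv; apply: rel.
  by apply: span_sub; exists x, e.
exact: Phi_mul_graph Gexv Gfexu.
Qed.

Lemma adjoint_sub_Phi_dual : adjoint G `<=` Phi_dual Phi f.
Proof.
by move=> [phi psi] [/= phid [psid rel]]; apply/Phi_dualP; split=> // d z _; apply: rel.
Qed.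

Lemma core_Phi_dual_sub_adjoint : core D G -> Phi_dual Phi f `<=` adjoint G.
Proof.
move=> [_ D_core] [phi psi] /Phi_dualP [phid psid rel]; do 2!split=> //.
move=> x y Gxy /=; apply/eqP; rewrite -subr_eq0 -rnorm_eq0 eq_le rnorm_ge0 andbT.
have [c1 c1_ge0 phi_le] := dualp_bound phid.
have [c2 c2_ge0 psi_le] := dualp_bound psid.
apply/ler_addgt0Pr => e e_gt0; rewrite add0r.
have [q q_gt0 qc] := exists_gt0_mulr_add1 e_gt0 (addr_ge0 c1_ge0 c2_ge0).
have : closure [set p | G p /\ D p.1] (x, y) by rewrite D_core.
move=> /closure_graphP /(_ q q_gt0) [a [b [[Gab Da] xa yb]]].
have -> : phi y - psi x = phi (y - b) - psi (x - a).
  by rewrite !dualpB // (rel a b) //; ring.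
apply: le_trans (rnormD _ _) _; rewrite rnormN.
have := phi_le (y - b); have := psi_le (x - a).
have : c1 * rnorm (y - b) <= c1 * q by rewrite ler_wpM2l // ltW.
have : c2 * rnorm (x - a) <= c2 * q by rewrite ler_wpM2l // ltW.
lra.
Qed.

Lemma core_of_adjoint_eq : adjoint G = Phi_dual Phi f -> core D G.
Proof.
move=> adj_eq; split; first exact: Dset_dom.
apply/seteqP; split; first exact: closure_restrict_sub (Phi_closed_op f).2 D.
move=> [x0 y0] Gxy0; apply: contrapT => /not_closure_graph [e e_gt0 far].
pose p (q : X * X) := rnorm q.1 + rnorm q.2.
have pD u v : p (u + v) <= p u + p v.
  by rewrite /p /=; have := rnormD u.1 v.1; have := rnormD u.2 v.2; lra.
have pZ c v : (p (c *: v))%:C = `|c| * (p v)%:C.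
  by rewrite /p /= !rmorphD /= !rnormZ mulrDr.
pose H := [set q | G q /\ D q.1].
have H0 : H 0 by split; [exact: linear_op0 (Phi_linear f) | exact: span0].
have HD u v : H u -> H v -> H (u + v).
  case: u v => [a b] [a' b'] [Gab Da] [Gab' Da'].
  by split; [exact: (linear_opD (Phi_linear f) Gab Gab') | exact: spanD].
have HZ c u : H u -> H (c *: u).
  case: u => a b [Gab Da].
  by split; [exact: (linear_opZ (Phi_linear f) c Gab) | exact: spanZ].
have xy0_far m : H m -> e <= p ((x0, y0) - m) by case: m => a b [Gab Da]; apply: far.
have [L [L_lin LH ReL L_le]] := hahn_banach_separation pD pZ H0 HD HZ e_gt0 xy0_far.
have [phid psid Lsplit] := dualp_pair_split L_lin L_le.
have : Phi_dual Phi f (fun y => L (0, y), fun x => - L (x, 0)).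
  apply/Phi_dualP; split=> //; first exact: dualpN.
  move=> d z Dd Gdz; apply/eqP; rewrite -addr_eq0 addrC -Lsplit; apply/eqP.
  by apply: LH; split.
rewrite -adj_eq => -[_ [_ /= rel]]; move: ReL.
by rewrite Lsplit (rel _ _ Gxy0) subrr => e0; rewrite -e0 ltxx in e_gt0.
Qed.

Hypothesis f_dual : Fdual Phi f.

Lemma Dset_dense : closure D = setT.
Proof.
apply/seteqP; split=> // x0 _; apply: contrapT => /not_closure_rnorm [e e_gt0 far].
have [L [L_lin LD ReL L_le]] := hahn_banach_separation (@rnormD _ X) (@rnormZ _ X)
  (span0 _) (@spanD _ _ _) (@spanZ _ _ _) e_gt0 far.
have Ld := dualp_of_le_rnorm L_lin L_le.
have [_ ker_trivial] := f_dual Bset1.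
have : L x0 = 0.
  apply: ker_trivial => e' Be'; rewrite mulr1 => Bfe'; split=> // x y Gexy.
  by apply/LD/span_sub; exists x, e'.
by move=> L0; move: ReL; rewrite L0 => e0; rewrite -e0 ltxx in e_gt0.
Qed.

Lemma op_dom_dense : closure (op_dom G) = setT.
Proof. by apply/seteqP; split=> // x _; apply: (closureS Dset_dom); rewrite Dset_dense. Qed.

Lemma bounded_core : bounded_op G -> core D G.
Proof.
move=> Gb; have [K K_ge0 G_le] := bounded_op_rnorm Gb.
split; first exact: Dset_dom.
apply/seteqP; split; first exact: closure_restrict_sub (Phi_closed_op f).2 D.
move=> [x y] Gxy; apply/closure_graphP => e e_gt0.
have [q q_gt0 qK] := exists_gt0_mulr_add1 e_gt0 K_ge0.
have : closure D x by rewrite Dset_dense.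
move=> /closure_rnormP /(_ q q_gt0) [d Dd xd].
have [z Gdz] := Dset_dom Dd.
have := G_le _ _ (linear_opB (Phi_linear f) Gxy Gdz).
have : K * rnorm (x - d) <= K * q by rewrite ler_wpM2l // ltW.
move=> Kxd yz; exists d, z; split=> //; nra.
Qed.

Lemma bounded_Phi_dual_eq : bounded_op G -> Phi_dual Phi f = adjoint G.
Proof.
move=> Gb; apply/seteqP; split; last exact: adjoint_sub_Phi_dual.
exact: core_Phi_dual_sub_adjoint (bounded_core Gb).
Qed.

Lemma bounded_of_dual_bounded : dual_bounded_op (Phi_dual Phi f) -> bounded_op G.
Proof.
move=> [_ dom_dual _ _ [M dual_le]].
have K_ge0 : 0 <= Order.max M 0 by rewrite le_max lexx orbT.
have DB a b : D a -> D b -> D (a - b) by apply: spanB.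
apply: (closed_op_bounded_on_dense (Phi_linear f) (Phi_closed_op f).2 Dset_dense
  Dset_dom DB K_ge0) => d z Dd Gdz.
have [L [Ld L_le1 zL]] := norming_functional z.
have [psi Lpsi] := dom_dual L Ld.
have /dual_norm_leP psi_le := dual_le L psi 1 Lpsi L_le1.
have [_ _ rel] := (Phi_dualP L psi).1 Lpsi.
apply: le_trans zL _; apply: le_trans (Re_le_rnorm _) _; rewrite (rel _ _ Dd Gdz).
by rewrite (le_trans (psi_le d)) // mulr1 ler_wpM2r ?rnorm_ge0 // le_max lexx.
Qed.

End ProtoCalculus.

Theorem theorem8p1 (R : realType) (X : completeNormedModType R[i])
  (F : algType R[i]) (Phi : F -> set (X * X))
  (hPhi : proto_calculus Phi) (f : F) (hf : Fdual Phi f) :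
  (* (a) *)
  (closure (Dset Phi f) = setT /\ Dset Phi f `<=` op_dom (Phi f)
     /\ closure (op_dom (Phi f)) = setT)
  (* (b) *)
  /\ (adjoint (Phi f) `<=` Phi_dual Phi f
      /\ (adjoint (Phi f) = Phi_dual Phi f <-> core (Dset Phi f) (Phi f)))
  (* (c) *)
  /\ ((bounded_op (Phi f) <-> dual_bounded_op (Phi_dual Phi f))
      /\ (bounded_op (Phi f) -> Phi_dual Phi f = adjoint (Phi f))).
Proof.
have D_dense := Dset_dense hPhi hf.
have D_dom := Dset_dom hPhi (f := f).
have adj_sub := adjoint_sub_Phi_dual hPhi (f := f).
split; first by split; [|split; [|exact: (op_dom_dense hPhi hf)]].
split.
  split=> //; split; first exact: (core_of_adjoint_eq hPhi).
  move=> D_core; apply/seteqP; split=> //.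
  exact: (core_Phi_dual_sub_adjoint hPhi D_core).
split; last exact: (bounded_Phi_dual_eq hPhi hf).
split; last exact: (bounded_of_dual_bounded hPhi hf).
move=> Gb; rewrite (bounded_Phi_dual_eq hPhi hf Gb).
exact: (adjoint_bounded (Phi_linear hPhi f) Gb).
Qed.
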